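(* The average-case quantum query complexity of the Search problem under the uniform distribution on $\{0,\dots,m-1\}^n$ satisfies $Q_{\mathcal U}(\mathrm{Search})\ge\sqrt{m/15}-\sqrt{1/5}$.
   Context: Let $m\ge2$, $\Sigma=\{0,\dots,m-1\}$. The Search problem: given $x\in\Sigma^n$, output an index $i\in\{1,\dots,n\}$ with $x_i=1$. Query model: the algorithm space has orthonormal basis $|i,b\rangle$, $i\in\{1,\dots,n\}$, $b\in\Sigma$; the oracle is $O_x|i,b\rangle=|i,b+x_i\bmod m\rangle$ (equivalently the phase oracle $|i,b\rangle\mapsto e^{2\pi\mathbf i bx_i/m}|i,b\rangle$). A memoryless $T$-query algorithm is a sequence of unitaries $U_0,\dots,U_T$ on this space with final state $U_TO_x\cdots U_1O_xU_0|\mathrm{init}\rangle$ for a fixed basis state $|\mathrm{init}\rangle$; its output is the index obtained by measuring the index register of the final state. $Q_{\mathcal U}(\mathrm{Search})$ is the smallest $T$ such that some $T$-query algorithm, on input $x$ drawn uniformly from $\Sigma^n$, outputs an $i$ with $x_i=1$ with probability at least $2/3$ (probability over both $x$ and the measurement). *)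

From mathcomp Require Import all_boot all_algebra.
From mathcomp Require Import reals.
From mathcomp.real_closed Require Import complex.
Set Implicit Arguments. Unset Strict Implicit. Unset Printing Implicit Defensive.
Import GRing.Theory Num.Theory.
Local Open Scope ring_scope.

(* Basis labels |i,b> of the algorithm space: i in {1..n} (as 'I_n), b in Sigma = 'I_m. *)
Definition Idx (n m : nat) : finType := ('I_n * 'I_m)%type.

Section Query.
Variables (R : realType) (n m : nat).
Local Notation C := (R[i]).
Local Notation I := (Idx n m).

(* Operators on the space C^(n*m): matrices indexed by basis labels,
   entry U a c = <a|U|c>. *)
Definition op := I -> I -> C.
Definition state := I -> C.

Definition apply_op (U : op) (v : state) : state := fun a => \sum_(c : I) U a c * v c.

(* U is unitary: U^dagger U = Id (equivalent to unitarity in finite dimension). *)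
Definition unitary (U : op) : Prop :=
  forall a c : I, \sum_(k : I) (U k a)^* * U k c = (a == c)%:R.

Lemma addmod_proof (b c : 'I_m) : ((b + c) %% m < m)%N.
Proof. by rewrite ltn_pmod // (leq_ltn_trans (leq0n b) (ltn_ord b)). Qed.
Definition addmod (b c : 'I_m) : 'I_m := Ordinal (addmod_proof b c).

Definition oracle_map (x : {ffun 'I_n -> 'I_m}) (a : I) : I := (a.1, addmod a.2 (x a.1)).
Definition oracle (x : {ffun 'I_n -> 'I_m}) : op :=
  fun a c => (a == oracle_map x c)%:R.

Definition basis_state (a0 : I) : state := fun a => (a == a0)%:R.

Fixpoint run (Us : nat -> op) (x : {ffun 'I_n -> 'I_m}) (init : I) (k : nat) : state :=
  match k with
  | 0 => apply_op (Us 0%N) (basis_state init)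
  | k'.+1 => apply_op (Us k) (apply_op (oracle x) (run Us x init k'))
  end.

Definition normsq (z : C) : R := complex.Re z ^+ 2 + complex.Im z ^+ 2.

(* probability that measuring the index register of the final state of the
   T-query algorithm yields an i with x_i = 1 *)
Definition success_prob (T : nat) (Us : nat -> op) (init : I) (x : {ffun 'I_n -> 'I_m}) : R :=
  \sum_(a : I | nat_of_ord (x a.1) == 1%N) normsq (run Us x init T a).

Definition avg_success (T : nat) (Us : nat -> op) (init : I) : R :=
  (#|{ffun 'I_n -> 'I_m}|%:R)^-1 * \sum_(x : {ffun 'I_n -> 'I_m}) success_prob T Us init x.

Definition solves_search_avg (T : nat) : Prop :=
  exists (Us : nat -> op) (init : I),
    (forall k, (k <= T)%N -> unitary (Us k)) /\ 2 / 3 <= avg_success T Us init.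

End Query.

(* Hybrid argument.  For an input x and a position i let x[i := 1] be x with
   its i-th letter set to 1, and let psi_x be the final state on input x.
   Since x[i := 1] is uniform on the inputs with x_i = 1, summing the success
   probability over all x gives (1/m) times the sum over x of
   sum_i ||P_i psi_(x[i := 1])||^2, where P_i projects on the block i.  A query
   on x[i := 1] differs from one on x only on the block i, so telescoping over
   the T queries gives sum_i ||psi_(x[i := 1]) - psi_x||^2 <= 4 T^2.  The
   weighted inequality |a + b|^2 <= (1 + l) |a|^2 + (1 + 1/l) |b|^2 with
   l = 2T + 1 then bounds sum_i ||P_i psi_(x[i := 1])||^2 by (2T + 1)^2 + 1, so
   an average success of 2/3 forces 2m/3 <= (2T + 1)^2 + 1. *)

From mathcomp Require Import all_boot all_order all_algebra perm.
From mathcomp Require Import reals.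
From mathcomp.real_closed Require Import complex.
From mathcomp Require Import ring lra.
Import Order.TTheory GRing.Theory Num.Theory.
Set Implicit Arguments. Unset Strict Implicit. Unset Printing Implicit Defensive.
Local Open Scope ring_scope.

Lemma sqrrD_le (R : realFieldType) (a c l : R) : 0 < l ->
  (a + c) ^+ 2 <= (1 + l) * a ^+ 2 + (1 + l^-1) * c ^+ 2.
Proof.
move=> l_gt0; rewrite -subr_ge0.
have -> : (1 + l) * a ^+ 2 + (1 + l^-1) * c ^+ 2 - (a + c) ^+ 2
          = l^-1 * (l * a - c) ^+ 2 by field; rewrite gt_eqF.
by rewrite mulr_ge0 ?sqr_ge0 // invr_ge0 ltW.
Qed.

Lemma sqrt_sub_le_of_quadratic (R : rcfType) (M t : R) : 0 <= t ->
  2 / 3 * M <= (2 * t + 1) ^+ 2 + 1 -> Num.sqrt (M / 15) - Num.sqrt (1 / 5) <= t.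
Proof.
move=> t_ge0 hM; set s := Num.sqrt (1 / 5 : R).
have s_ge0 : 0 <= s by apply: sqrtr_ge0.
have s_sq : s ^+ 2 = 1 / 5 by rewrite sqr_sqrtr // divr_ge0.
have s_gt : 2 / 5 <= s by nra.
rewrite lerBlDr -(ger0_norm (addr_ge0 t_ge0 s_ge0)) -sqrtr_sqr ler_sqrt ?sqr_ge0 //.
nra.
Qed.

Section SquaredModulus.
Variable R : realType.
Implicit Types (z w : R[i]) (l : R).

Lemma normsq_ge0 z : 0 <= normsq z.
Proof. by rewrite addr_ge0 ?sqr_ge0. Qed.

Lemma normsq0 : normsq (0 : R[i]) = 0.
Proof. by rewrite /normsq /= expr0n addr0. Qed.

Lemma normsqN z : normsq (- z) = normsq z.
Proof. by case: z => a b; rewrite /normsq /= !sqrrN. Qed.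

Lemma normsqE z : real_complex R (normsq z) = z * z^*.
Proof. by rewrite /normsq add_Re2_Im2 normCK. Qed.

Lemma normsqD_le z w l : 0 < l ->
  normsq (z + w) <= (1 + l) * normsq z + (1 + l^-1) * normsq w.
Proof.
case: z w => [a b] [c d] l_gt0; rewrite /normsq /= !mulrDr addrACA.
by apply: lerD; apply: sqrrD_le.
Qed.

Lemma normsqB_le z w : normsq (z - w) <= 2 * normsq z + 2 * normsq w.
Proof. by have := normsqD_le z (- w) ltr01; rewrite invr1 normsqN. Qed.

End SquaredModulus.

Section SquaredNorm.
Variables (R : realType) (I : finType).
Implicit Types (v w : I -> R[i]).

Definition sqnorm v : R := \sum_a normsq (v a).

Lemma eq_sqnorm v w : v =1 w -> sqnorm v = sqnorm w.
Proof. by move=> vw; apply: eq_bigr => a _; rewrite vw. Qed.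

Lemma sqnormD_le v w l : 0 < l ->
  sqnorm (v \+ w) <= (1 + l) * sqnorm v + (1 + l^-1) * sqnorm w.
Proof.
move=> l_gt0; rewrite /sqnorm !mulr_sumr -big_split /=.
by apply: ler_sum => a _; apply: normsqD_le.
Qed.

End SquaredNorm.

Section FfunUpdate.
Variables (A B : finType).
Implicit Types (x : {ffun A -> B}) (i : A) (c : B).

Definition update x i c : {ffun A -> B} := [ffun j => if j == i then c else x j].

Lemma sum_update (V : nmodType) (G : {ffun A -> B} -> V) i c :
  \sum_x G (update x i c) = (\sum_(x : {ffun A -> B} | x i == c) G x) *+ #|B|.
Proof.
rewrite (partition_big (fun x : {ffun A -> B} => x i) predT) //= -sumr_const.
apply: eq_bigr => b _.
pose swap x : {ffun A -> B} := [ffun j => if j == i then tperm b c (x j) else x j].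
have swapK : involutive swap.
  by move=> x; apply/ffunP => j; rewrite !ffunE; case: eqP => // _; rewrite tpermK.
have swap_at x : (swap x i == b) = (x i == c).
  by rewrite ffunE eqxx -{2}(tpermR b c) (inj_eq perm_inj).
rewrite (reindex_inj (inv_inj swapK)) /=; apply: eq_big => x; first exact: swap_at.
rewrite swap_at => /eqP xi; congr G; apply/ffunP => j; rewrite !ffunE.
by case: eqP => // ->; rewrite xi.
Qed.

End FfunUpdate.

Section QueryAlgorithm.
Variables (R : realType) (n m : nat).
Local Notation I := (Idx n m).
Local Notation state := (state R n m).
Local Notation op := (op R n m).
Local Notation input := {ffun 'I_n -> 'I_m}.
Implicit Types (U : op) (v w : state) (x : input) (i : 'I_n).

Definition block_sqnorm i v : R := \sum_(a : I | a.1 == i) normsq (v a).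

Lemma sum_block_sqnorm v : \sum_i block_sqnorm i v = sqnorm v.
Proof. by rewrite /sqnorm (partition_big (fun a : I => a.1) predT). Qed.

Lemma block_sqnorm_le v i : block_sqnorm i v <= sqnorm v.
Proof.
rewrite /sqnorm (bigID (fun a : I => a.1 == i)) /= lerDl.
by apply: sumr_ge0 => a _; apply: normsq_ge0.
Qed.

Lemma sum_normsq_block (f : 'I_n -> state) :
  \sum_(a : I) normsq (f a.1 a) = \sum_i block_sqnorm i (f i).
Proof.
rewrite (partition_big (fun a : I => a.1) predT) //=.
by apply: eq_bigr => i _; apply: eq_bigr => a /eqP ->.
Qed.

Lemma apply_opB U v w : apply_op U (v \- w) =1 apply_op U v \- apply_op U w.
Proof. by move=> a; rewrite /apply_op /= -sumrB; apply: eq_bigr => b _; rewrite mulrBr. Qed.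

Lemma apply_op_eq0 U v : v =1 (fun _ => 0) -> apply_op U v =1 (fun _ => 0).
Proof. by move=> v0 a; rewrite /apply_op big1 // => b _; rewrite v0 mulr0. Qed.

Lemma sqnorm_unitary U v : unitary U -> sqnorm (apply_op U v) = sqnorm v.
Proof.
move=> U_unitary; apply: (@complexI R); rewrite /sqnorm !raddf_sum /=.
under eq_bigr do rewrite normsqE.
under [RHS]eq_bigr do rewrite normsqE.
transitivity (\sum_c \sum_d (v c * (v d)^*) * \sum_a (U a d)^* * U a c).
  rewrite /apply_op; under eq_bigr do rewrite rmorph_sum mulr_suml.
  rewrite exchange_big; apply: eq_bigr => c _.
  under eq_bigr do rewrite mulr_sumr.
  rewrite exchange_big; apply: eq_bigr => d _.
  rewrite mulr_sumr; apply: eq_bigr => a _; rewrite rmorphM /=; ring.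
apply: eq_bigr => c _; under eq_bigr do rewrite U_unitary.
rewrite (bigD1 c) //= eqxx mulr1 big1 ?addr0 // => d /negbTE dc.
by rewrite dc mulr0.
Qed.

Lemma oracle_map_inj x : injective (oracle_map x).
Proof.
move=> [i b] [j c] [<-] /eqP; rewrite eqn_modDr !modn_small // => /eqP bc.
by congr (_, _); apply: val_inj.
Qed.

Lemma apply_oracle_map x v c : apply_op (oracle R x) v (oracle_map x c) = v c.
Proof.
rewrite /apply_op /oracle (bigD1 c) //= eqxx mul1r big1 ?addr0 // => d dc.
by rewrite (inj_eq (@oracle_map_inj x)) eq_sym (negbTE dc) mul0r.
Qed.

Lemma sqnorm_oracle x v : sqnorm (apply_op (oracle R x) v) = sqnorm v.
Proof.
rewrite /sqnorm (reindex_inj (@oracle_map_inj x)).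
by apply: eq_bigr => a _; rewrite apply_oracle_map.
Qed.

Lemma block_sqnorm_oracle x v i : block_sqnorm i (apply_op (oracle R x) v) = block_sqnorm i v.
Proof.
rewrite /block_sqnorm (reindex_inj (@oracle_map_inj x)) /=.
by apply: eq_bigr => a _; rewrite apply_oracle_map.
Qed.

Definition oracle_gap x y v : state := apply_op (oracle R y) v \- apply_op (oracle R x) v.

Lemma oracle_update_out x i c v (a : I) : a.1 != i ->
  apply_op (oracle R (update x i c)) v a = apply_op (oracle R x) v a.
Proof.
move=> ai; apply: eq_bigr => d _; case: (eqVneq d.1 i) => [di | dNi].
  have a_neq y : (a == oracle_map y d) = false by apply: contra_neqF ai => /eqP ->.
  by rewrite /oracle !a_neq.
by rewrite /oracle /oracle_map /update ffunE (negbTE dNi).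
Qed.

Lemma sqnorm_oracle_gap_update x i c v :
  sqnorm (oracle_gap x (update x i c) v) <= 4 * block_sqnorm i v.
Proof.
rewrite /sqnorm (bigID (fun a : I => a.1 == i)) /=.
rewrite [X in _ + X]big1 ?addr0 => [|a ai]; last first.
  by rewrite /oracle_gap /= oracle_update_out // subrr normsq0.
apply: le_trans (ler_sum _ (fun a _ => normsqB_le _ _)) _.
rewrite big_split /= -!mulr_sumr.
have := block_sqnorm_oracle (update x i c) v i; have := block_sqnorm_oracle x v i.
rewrite /block_sqnorm => -> ->; lra.
Qed.

Lemma sqnorm_basis_state (a0 : I) : sqnorm (basis_state R a0) = 1.
Proof.
rewrite /sqnorm (bigD1 a0) //= big1 => [|a /negbTE]; rewrite /basis_state.
  by rewrite eqxx addr0 /normsq /= expr0n addr0 expr1n.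
by move=> ->; rewrite normsq0.
Qed.

Section Run.
Variables (Us : nat -> op) (init : I).

Lemma sqnorm_run x k : (forall j, (j <= k)%N -> unitary (Us j)) -> sqnorm (run Us x init k) = 1.
Proof.
elim: k => [|k IH] U_unitary /=; rewrite (sqnorm_unitary _ (U_unitary _ _)) //.
  exact: sqnorm_basis_state.
by rewrite sqnorm_oracle IH // => j jk; apply: U_unitary; rewrite leqW.
Qed.

Lemma sqnorm_run_sub_succ x y k : unitary (Us k.+1) ->
  sqnorm (run Us y init k.+1 \- run Us x init k.+1) =
  sqnorm (apply_op (oracle R y) (run Us y init k \- run Us x init k)
          \+ oracle_gap x y (run Us x init k)).
Proof.
move=> U_unitary; rewrite -(eq_sqnorm (apply_opB _ _ _)) sqnorm_unitary //.
by apply: eq_sqnorm => a; rewrite /oracle_gap /= apply_opB /= addrA subrK.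
Qed.

Lemma run_sub0 x y : run Us y init 0 \- run Us x init 0 =1 (fun _ => 0).
Proof. by move=> a; rewrite /= subrr. Qed.

(* The weight l = 1/k in sqnormD_le makes the bound telescope. *)
Lemma sqnorm_run_sub_le x y k : (forall j, (j <= k)%N -> unitary (Us j)) ->
  sqnorm (run Us y init k \- run Us x init k)
    <= k%:R * \sum_(t < k) sqnorm (oracle_gap x y (run Us x init t)).
Proof.
elim: k => [|k IH] U_unitary.
  by rewrite (eq_sqnorm (run_sub0 x y)) big_ord0 mulr0 /sqnorm big1 // => a _; rewrite normsq0.
rewrite sqnorm_run_sub_succ; last exact: U_unitary.
rewrite big_ord_recr /=.
have {}IH := IH (fun j jk => U_unitary j (leqW jk)).
case: k IH {U_unitary} => [_ | k IH].
  rewrite big_ord0 add0r mul1r le_eqVlt.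
  rewrite (eq_sqnorm (w := oracle_gap x y (run Us x init 0))) ?eqxx // => a.
  by rewrite /= (apply_op_eq0 _ (run_sub0 x y)) add0r.
have k_inv_gt0 : 0 < (k.+1%:R : R)^-1 by rewrite invr_gt0 ltr0n.
apply: le_trans (sqnormD_le _ _ k_inv_gt0) _.
rewrite invrK sqnorm_oracle.
set S := \sum_(t < k.+1) _ in IH *; set E := sqnorm (oracle_gap _ _ _).
have -> : k.+2%:R * (S + E) = (1 + k.+1%:R^-1) * (k.+1%:R * S) + (1 + k.+1%:R) * E.
  by rewrite [k.+2%:R]mulrS; field; rewrite -mulrS pnatr_eq0.
by rewrite lerD // ler_wpM2l // addr_ge0 // invr_ge0 ltW.
Qed.

Variable T : nat.
Hypothesis U_unitary : forall k, (k <= T)%N -> unitary (Us k).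

Lemma sum_sqnorm_run_update_sub x c :
  \sum_i sqnorm (run Us (update x i c) init T \- run Us x init T) <= 4 * T%:R ^+ 2.
Proof.
apply: le_trans (_ : \sum_i T%:R * \sum_(t < T) 4 * block_sqnorm i (run Us x init t) <= _).
  apply: ler_sum => i _; apply: le_trans (sqnorm_run_sub_le _ _ U_unitary) _.
  by rewrite ler_wpM2l // ler_sum // => t _; apply: sqnorm_oracle_gap_update.
have run_mass (t : 'I_T) : \sum_i 4 * block_sqnorm i (run Us x init t) = 4.
  rewrite -mulr_sumr sum_block_sqnorm sqnorm_run ?mulr1 // => j jt.
  by apply: U_unitary; rewrite (leq_trans jt) // ltnW.
rewrite -mulr_sumr exchange_big /= (eq_bigr _ (fun t _ => run_mass t)).
by rewrite sumr_const card_ord -mulr_natr; lra.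
Qed.

Lemma success_mass_le x c :
  \sum_(a : I) normsq (run Us (update x a.1 c) init T a) <= (2 * T%:R + 1) ^+ 2 + 1.
Proof.
set l : R := 2 * T%:R + 1; have l_gt0 : 0 < l by rewrite ltr_pwDr // mulr_ge0.
pose psi := run Us x init T; pose psi_ i := run Us (update x i c) init T.
apply: le_trans (_ : \sum_(a : I) ((1 + l) * normsq (psi a)
    + (1 + l^-1) * normsq ((psi_ a.1 \- psi) a)) <= _).
  by apply: ler_sum => a _; rewrite -[X in normsq X](addrNK (psi a)) addrC normsqD_le.
rewrite big_split /= -!mulr_sumr [\sum_a normsq (psi a)]sqnorm_run // mulr1.
rewrite (sum_normsq_block (fun i => psi_ i \- psi)).
have gap_le : \sum_i block_sqnorm i (psi_ i \- psi) <= 4 * T%:R ^+ 2.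
  apply: le_trans (sum_sqnorm_run_update_sub x c).
  by apply: ler_sum => i _; apply: block_sqnorm_le.
have T_ge0 : 0 <= T%:R :> R := ler0n _ _.
have l_inv : l^-1 * (4 * T%:R ^+ 2) <= 2 * T%:R.
  by rewrite mulrC ler_pdivrMr // /l; nra.
have weight_ge0 : 0 <= 1 + l^-1 by rewrite addr_ge0 // invr_ge0 ltW.
have := ler_wpM2l weight_ge0 gap_le; rewrite /l in l_inv *; nra.
Qed.

Lemma sum_success_prob (one : 'I_m) : one = 1%N :> nat ->
  (\sum_x success_prob T Us init x) *+ m
    = \sum_x \sum_(a : I) normsq (run Us (update x a.1 one) init T a).
Proof.
move=> one1; rewrite [RHS]exchange_big.
under [RHS]eq_bigr => a _ do rewrite (sum_update (fun x => normsq (run Us x init T a))).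
rewrite sumrMnl card_ord /success_prob; congr (_ *+ _).
rewrite (exchange_big_dep (fun a : I => true)) //=.
by apply: eq_bigr => a _; apply: eq_bigl => x; rewrite -one1.
Qed.

Lemma avg_success_le : (1 < m)%N ->
  avg_success T Us init <= ((2 * T%:R + 1) ^+ 2 + 1) / m%:R.
Proof.
move=> m_gt1; have m_gt0 : 0 < m%:R :> R by rewrite ltr0n ltnW.
have N_gt0 : 0 < #|{ffun 'I_n -> 'I_m}|%:R :> R.
  by rewrite ltr0n card_ffun card_ord expn_gt0 ltnW.
rewrite /avg_success ler_pdivlMr // -mulrA (mulr_natr _ m) ler_pdivrMl //.
rewrite (sum_success_prob (one := Ordinal m_gt1)) //.
apply: le_trans (ler_sum _ (fun x _ => success_mass_le x _)) _.
by rewrite sumr_const -[X in X <= _]mulr_natl.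
Qed.

End Run.
End QueryAlgorithm.

Theorem proposition4p9 (R : realType) (n m : nat) (hm : (2 <= m)%N) (T : nat) :
  solves_search_avg R n m T ->
  Num.sqrt (m%:R / 15 : R) - Num.sqrt (1 / 5 : R) <= T%:R.
Proof.
move=> [Us [init [U_unitary success]]].
apply: sqrt_sub_le_of_quadratic => //.
have := le_trans success (avg_success_le init U_unitary hm).
by rewrite ler_pdivlMr ?ltr0n 1?ltnW // mulrC.
Qed.
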